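(* Under the standing assumptions, writing (R2) for the condition $\mathscr{R}(CC^*B^* )=\mathscr{R}(B^* )$, the following hold. (41) $\{M^{(1,2,4)}\}\subseteq\{C^{-1}B^{(1)}A^{-1}\}$; and $\{M^{(1,2,4)}\}\supseteq\{C^{-1}B^{(1)}A^{-1}\}\Leftrightarrow\{M^{(1,2,4)}\}=\{C^{-1}B^{(1)}A^{-1}\}\Leftrightarrow r(B)=n$. (42) $\{M^{(1,2,4)}\}\subseteq\{C^{-1}B^{(1,2)}A^{-1}\}$; and $\{M^{(1,2,4)}\}\supseteq\{C^{-1}B^{(1,2)}A^{-1}\}\Leftrightarrow\{M^{(1,2,4)}\}=\{C^{-1}B^{(1,2)}A^{-1}\}\Leftrightarrow B=0$ or $r(B)=n$. (43) $\{M^{(1,2,4)}\}\cap\{C^{-1}B^{(1,3)}A^{-1}\}\neq\emptyset$; $\{M^{(1,2,4)}\}\supseteq\{C^{-1}B^{(1,3)}A^{-1}\}\Leftrightarrow r(B)=n$; $\{M^{(1,2,4)}\}\subseteq\{C^{-1}B^{(1,3)}A^{-1}\}\Leftrightarrow B=0$ or $r(B)=m$; $\{M^{(1,2,4)}\}=\{C^{-1}B^{(1,3)}A^{-1}\}\Leftrightarrow r(B)=m=n$. (44) $\{M^{(1,2,4)}\}\cap\{C^{-1}B^{(1,4)}A^{-1}\}\neq\emptyset\Leftrightarrow\{M^{(1,2,4)}\}\subseteq\{C^{-1}B^{(1,4)}A^{-1}\}\Leftrightarrow$ (R2); and $\{M^{(1,2,4)}\}\supseteq\{C^{-1}B^{(1,4)}A^{-1}\}\Leftrightarrow\{M^{(1,2,4)}\}=\{C^{-1}B^{(1,4)}A^{-1}\}\Leftrightarrow$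 (R2) and $r(B)=\min\{m,n\}$. (45) $\{M^{(1,2,4)}\}\cap\{C^{-1}B^{(1,2,3)}A^{-1}\}\neq\emptyset$; $\{M^{(1,2,4)}\}\supseteq\{C^{-1}B^{(1,2,3)}A^{-1}\}\Leftrightarrow B=0$ or $r(B)=n$; $\{M^{(1,2,4)}\}\subseteq\{C^{-1}B^{(1,2,3)}A^{-1}\}\Leftrightarrow B=0$ or $r(B)=m$; $\{M^{(1,2,4)}\}=\{C^{-1}B^{(1,2,3)}A^{-1}\}\Leftrightarrow B=0$ or $r(B)=m=n$. (46) $\{M^{(1,2,4)}\}\cap\{C^{-1}B^{(1,2,4)}A^{-1}\}\neq\emptyset\Leftrightarrow\{M^{(1,2,4)}\}=\{C^{-1}B^{(1,2,4)}A^{-1}\}\Leftrightarrow$ (R2). (47) $\{M^{(1,2,4)}\}\cap\{C^{-1}B^{(1,3,4)}A^{-1}\}\neq\emptyset\Leftrightarrow$ (R2); $\{M^{(1,2,4)}\}\supseteq\{C^{-1}B^{(1,3,4)}A^{-1}\}\Leftrightarrow$ (R2) and $r(B)=\min\{m,n\}$; $\{M^{(1,2,4)}\}\subseteq\{C^{-1}B^{(1,3,4)}A^{-1}\}\Leftrightarrow B=0$ or ((R2) and $r(B)=m$); $\{M^{(1,2,4)}\}=\{C^{-1}B^{(1,3,4)}A^{-1}\}\Leftrightarrow$ (R2) and $r(B)=m$. (48) $C^{-1}B^\dagger A^{-1}\in\{M^{(1,2,4)}\}\Leftrightarrow$ (R2).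
   Context: Standing assumptions: $m,n\ge1$; $A\in\mathbb{C}^{m\times m}$ and $C\in\mathbb{C}^{n\times n}$ are nonsingular; $B\in\mathbb{C}^{m\times n}$; $M=ABC$. For a complex matrix $X$, $X^*$ is its conjugate transpose, $r(X)$ its rank and $\mathscr{R}(X)$ its column space. For $X\in\mathbb{C}^{p\times q}$, a matrix $G\in\mathbb{C}^{q\times p}$ is called an $\{i,\ldots,j\}$-generalized inverse of $X$ (written $X^{(i,\ldots,j)}$) if it satisfies the equations numbered $i,\ldots,j$ among the four Penrose equations (i) $XGX=X$, (ii) $GXG=G$, (iii) $(XG)^*=XG$, (iv) $(GX)^*=GX$; $\{X^{(i,\ldots,j)}\}$ denotes the set of all such $G$. The Moore–Penrose inverse $X^\dagger$ is the unique matrix satisfying all four equations. For a type $(k,\ldots,l)$, $\{C^{-1}B^{(k,\ldots,l)}A^{-1}\}:=\{C^{-1}GA^{-1}: G\in\{B^{(k,\ldots,l)}\}\}$. *)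

(* Complex matrices are modelled over an arbitrary
   numClosedFieldType F (algebraically closed field with conjugation and
   order, e.g. algC or C itself). *)
From HB Require Import structures.
From mathcomp Require Import all_boot all_order all_algebra.
From Stdlib Require Import ClassicalEpsilon.
Set Implicit Arguments. Unset Strict Implicit. Unset Printing Implicit Defensive.
Import Order.TTheory GRing.Theory Num.Theory.
Local Open Scope ring_scope.

Section Defs.
Variable F : numClosedFieldType.

Definition ctr (p q : nat) (X : 'M[F]_(p, q)) : 'M[F]_(q, p) :=
  (map_mx (fun x : F => x^*) X)^T.

(* Column space equality R(X) = R(Y): column space of X is the row space of X^T *)
Definition colspace_eq (p q r : nat) (X : 'M[F]_(p, q)) (Y : 'M[F]_(p, r)) : Prop :=
  (X^T == Y^T)%MS.

Definition penrose (i : nat) (p q : nat) (X : 'M[F]_(p, q)) (G : 'M[F]_(q, p)) : Prop :=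
  match i with
  | 1 => X *m G *m X = X
  | 2 => G *m X *m G = G
  | 3 => ctr (X *m G) = X *m G
  | 4 => ctr (G *m X) = G *m X
  | _ => True
  end.

Definition ginv (t : seq nat) (p q : nat) (X : 'M[F]_(p, q)) (G : 'M[F]_(q, p)) : Prop :=
  forall i, i \in t -> penrose i X G.

Definition mpinv (p q : nat) (X : 'M[F]_(p, q)) : 'M[F]_(q, p) :=
  epsilon (inhabits 0) (fun G => ginv [:: 1; 2; 3; 4]%N X G).

Definition tset (t : seq nat) (m n : nat) (A : 'M[F]_m) (B : 'M[F]_(m, n)) (C : 'M[F]_n)
  (H : 'M[F]_(n, m)) : Prop :=
  exists G, ginv t B G /\ H = invmx C *m G *m invmx A.

Definition msubset (p q : nat) (S T : 'M[F]_(p, q) -> Prop) : Prop :=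
  forall X, S X -> T X.
Definition mseteq (p q : nat) (S T : 'M[F]_(p, q) -> Prop) : Prop :=
  forall X, S X <-> T X.
Definition mmeets (p q : nat) (S T : 'M[F]_(p, q) -> Prop) : Prop :=
  exists X, S X /\ T X.

End Defs.

(* Put [N := B *m C] and [Y := H *m A].  As [A] and [C] are invertible, [H]
   is a {1,2,4}-inverse of [M] iff [Y] is one of [N], and [C^-1 B^(t) A^-1]
   becomes the set [N{t}] of such [Y] when (4) is not in [t].  Equation (4)
   for [B] instead prescribes the projector [Y *m N] to be [Y0 *m N], where
   [Y0 := C^-1 B^+] is a {1,2,3}-inverse of [N]; since every {1,4}-inverse
   [Y] of [N] has [Y *m N = N^+ *m N], condition (R2) is just
   [Y0 *m N = N^+ *m N].
   Everything then reduces to two facts about a matrix [K].  If [K] has full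
   column (row) rank, every {1}-inverse is a {2,4}- ({2,3}-)inverse.
   Otherwise, with [E := I - K^+ K] and [G := I - K K^+], the families
   [K^+ + E W K K^+], [K^+ + K^+ K W G] and [K^+ + E W G] contain
   {1,2,3}-inverses that are not {4}-inverses, {1,2,4}-inverses that are not
   {3}-inverses and {1,3,4}-inverses that are not {2}-inverses, because
   [H0 + E W G] is hermitian (resp. zero) for all [W] only if [E = 0] or
   [G = 0]. *)

From HB Require Import structures.
From mathcomp Require Import all_boot all_order all_algebra.
From mathcomp Require Import zify.
From Stdlib Require Import ClassicalEpsilon FunctionalExtensionality PropExtensionality.
Set Implicit Arguments. Unset Strict Implicit. Unset Printing Implicit Defensive.
Import Order.TTheory GRing.Theory Num.Theory.
Local Open Scope ring_scope.

Section ConjugateTranspose.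
Variable F : numClosedFieldType.

Lemma ctrM (p q r : nat) (X : 'M[F]_(p, q)) (Y : 'M[F]_(q, r)) :
  ctr (X *m Y) = ctr Y *m ctr X.
Proof. by rewrite /ctr map_mxM trmx_mul. Qed.

Lemma ctrK (p q : nat) (X : 'M[F]_(p, q)) : ctr (ctr X) = X.
Proof. by apply/matrixP=> i j; rewrite /ctr !mxE conjCK. Qed.

Lemma ctrD (p q : nat) (X Y : 'M[F]_(p, q)) : ctr (X + Y) = ctr X + ctr Y.
Proof. by rewrite /ctr map_mxD linearD. Qed.

Lemma ctrZ (p q : nat) (a : F) (X : 'M[F]_(p, q)) : ctr (a *: X) = a^* *: ctr X.
Proof. by rewrite /ctr map_mxZ linearZ. Qed.

Lemma ctr0 (p q : nat) : ctr (0 : 'M[F]_(p, q)) = 0.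
Proof. by rewrite /ctr map_mx0 trmx0. Qed.

Lemma ctr1 (p : nat) : ctr (1%:M : 'M[F]_p) = 1%:M.
Proof. by rewrite /ctr map_mx1 trmx1. Qed.

Lemma ctr_inv (p : nat) (X : 'M[F]_p) : ctr (invmx X) = invmx (ctr X).
Proof. by rewrite /ctr map_invmx trmx_inv. Qed.

Lemma ctr_unit (p : nat) (X : 'M[F]_p) : (ctr X \in unitmx) = (X \in unitmx).
Proof. by rewrite /ctr unitmx_tr map_unitmx. Qed.

Lemma mxrank_ctr (p q : nat) (X : 'M[F]_(p, q)) : \rank (ctr X) = \rank X.
Proof. by rewrite /ctr mxrank_tr mxrank_map. Qed.

(* The diagonal of [X *m ctr X] holds the squared norms of the rows of [X]. *)
Lemma mulmx_ctr_eq0 (p q : nat) (X : 'M[F]_(p, q)) : X *m ctr X = 0 -> X = 0.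
Proof.
move=> XX0; apply/matrixP=> i j; rewrite mxE.
have /eqP := congr1 (fun Z : 'M[F]_p => Z i i) XX0.
have -> : (X *m ctr X) i i = \sum_k `|X i k| ^+ 2.
  by rewrite mxE; apply: eq_bigr => k _; rewrite /ctr !mxE normCK.
rewrite mxE psumr_eq0; last by move=> k _; rewrite exprn_ge0.
move=> /allP /(_ j (mem_index_enum _)) /=.
by rewrite sqrf_eq0 normr_eq0 => /eqP.
Qed.

Lemma row_free_gram_unit (p q : nat) (X : 'M[F]_(p, q)) :
  row_free X -> X *m ctr X \in unitmx.
Proof.
move=> freeX; rewrite -row_free_unit -kermx_eq0; apply/eqP.
set L := kermx _; have LXX : L *m (X *m ctr X) = 0 by apply/sub_kermxP.
have : (L *m X) *m ctr (L *m X) = 0 by rewrite ctrM !mulmxA -(mulmxA L) LXX mul0mx.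
by move/mulmx_ctr_eq0/eqP; rewrite mulmx_free_eq0 // => /eqP.
Qed.

End ConjugateTranspose.

Section Sandwich.
Variable F : numClosedFieldType.

Lemma mulmx_delta_mx_entry (s t u v : nat) (E : 'M[F]_(s, t)) (G : 'M[F]_(u, v)) i j k l :
  (E *m delta_mx j k *m G) i l = E i j * G k l.
Proof.
rewrite !mxE (bigD1 k) //= big1 ?addr0 => [|k' k'k]; last first.
  by rewrite !mxE big1 ?mul0r // => j' _; rewrite mxE (negbTE k'k) andbF mulr0.
rewrite !mxE (bigD1 j) //= big1 ?addr0 => [|j' j'j]; last by rewrite mxE (negbTE j'j) mulr0.
by rewrite mxE !eqxx mulr1.
Qed.

Lemma sandwich_eq0 (s t u v : nat) (E : 'M[F]_(s, t)) (G : 'M[F]_(u, v)) :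
  (forall Z, E *m Z *m G = 0) -> E = 0 \/ G = 0.
Proof.
move=> EZG0; have [->|/matrix0Pn[i [j Eij]]] := eqVneq E 0; [by left | right].
apply/matrixP=> k l; have /eqP := congr1 (fun Z : 'M_(s, v) => Z i l) (EZG0 (delta_mx j k)).
by rewrite mulmx_delta_mx_entry !mxE mulf_eq0 (negbTE Eij) => /eqP.
Qed.

(* Testing hermitian-ness at [Z] and at ['i *: Z] forces [E *m Z *m G = 0]. *)
Lemma sandwich_hermitian (s t u : nat) (H0 : 'M[F]_s) (E : 'M[F]_(s, t)) (G : 'M[F]_(u, s)) :
  (forall Z, ctr (H0 + E *m Z *m G) = H0 + E *m Z *m G) -> E = 0 \/ G = 0.
Proof.
move=> herm; apply: sandwich_eq0 => Z.
have H0h : ctr H0 = H0 by have := herm 0; rewrite mulmx0 mul0mx addr0.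
have EZGh W : ctr (E *m W *m G) = E *m W *m G by have := herm W; rewrite ctrD H0h => /addrI.
have := EZGh ('i *: Z); rewrite -scalemxAr -scalemxAl ctrZ EZGh conjCi scaleNr.
move/eqP; rewrite eq_sym -subr_eq0 opprK -scalerDl scaler_eq0 => /orP[|/eqP //].
by rewrite -mulr2n mulrn_eq0 (negbTE (neq0Ci F)).
Qed.

End Sandwich.

Section GeneralizedInverses.
Variables (F : numClosedFieldType) (p q : nat).
Implicit Types (K : 'M[F]_(p, q)) (Y : 'M[F]_(q, p)) (s t : seq nat).

Lemma ginv_sub s t K Y : all (mem t) s -> ginv t K Y -> ginv s K Y.
Proof. by move=> /allP st KY i /st; apply: KY. Qed.

Lemma msubset_ginv s t K : all (mem t) s -> msubset (ginv t K) (ginv s K).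
Proof. by move=> st Y; apply: ginv_sub. Qed.

Lemma ginv1P i K Y : ginv [:: i] K Y <-> penrose i K Y.
Proof. by split=> [KY|KY j]; [apply: KY; rewrite inE | rewrite inE => /eqP ->]. Qed.

Lemma ginv2P i j K Y : ginv [:: i; j] K Y <-> penrose i K Y /\ penrose j K Y.
Proof.
split=> [KY|[Ki Kj] k]; first by split; apply: KY; rewrite !inE eqxx ?orbT.
by rewrite !inE => /orP[] /eqP ->.
Qed.

Lemma ginv3P i j k K Y :
  ginv [:: i; j; k] K Y <-> [/\ penrose i K Y, penrose j K Y & penrose k K Y].
Proof.
split=> [KY|[Ki Kj Kk] l]; first by split; apply: KY; rewrite !inE eqxx ?orbT.
by rewrite !inE => /or3P[] /eqP ->.
Qed.

Lemma ginv_rcons s i K Y : ginv (rcons s i) K Y <-> ginv s K Y /\ penrose i K Y.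
Proof.
split=> [KY|[Ks Ki] j].
  by split=> [j js|]; apply: KY; rewrite mem_rcons inE ?js ?eqxx ?orbT.
by rewrite mem_rcons inE => /orP[/eqP ->|/Ks].
Qed.

End GeneralizedInverses.

Section MoorePenroseInverse.
Variable F : numClosedFieldType.

(* For a full-rank factorization [K = X *m Y], the usual formula
   [ctr Y (Y ctr Y)^-1 (ctr X X)^-1 ctr X] is a Moore--Penrose inverse. *)
Lemma full_rank_factor_mpinv (p q r : nat) (X : 'M[F]_(p, r)) (Y : 'M[F]_(r, q)) :
  row_free Y -> row_free (ctr X) -> exists G, ginv [:: 1; 2; 3; 4] (X *m Y) G.
Proof.
move=> freeY freeXt.
have uY := row_free_gram_unit freeY.
have uX := row_free_gram_unit freeXt; rewrite ctrK in uX.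
set GY := invmx (Y *m ctr Y); set GX := invmx (ctr X *m X).
have GYh : ctr GY = GY by rewrite /GY ctr_inv ctrM ctrK.
have GXh : ctr GX = GX by rewrite /GX ctr_inv ctrM ctrK.
exists (ctr Y *m GY *m GX *m ctr X).
have KG : X *m Y *m (ctr Y *m GY *m GX *m ctr X) = X *m GX *m ctr X.
  by rewrite !mulmxA -(mulmxA X Y) /GY (mulmxK uY).
have GK : ctr Y *m GY *m GX *m ctr X *m (X *m Y) = ctr Y *m GY *m Y.
  by rewrite !mulmxA -(mulmxA _ (ctr X) X) /GX (mulmxKV uX).
move=> i; rewrite !inE => /or4P[] /eqP -> /=.
- by rewrite KG !mulmxA -(mulmxA _ (ctr X) X) /GX (mulmxKV uX).
- by rewrite GK !mulmxA -(mulmxA _ Y (ctr Y)) /GY (mulmxKV uY).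
- by rewrite KG !ctrM ctrK GXh mulmxA.
- by rewrite GK !ctrM ctrK GYh mulmxA.
Qed.

Lemma mpinvP (p q : nat) (K : 'M[F]_(p, q)) : ginv [:: 1; 2; 3; 4] K (mpinv K).
Proof.
have [G KG] : exists G, ginv [:: 1; 2; 3; 4] K G.
  rewrite -(mulmx_base K); apply: full_rank_factor_mpinv; first exact: row_base_free.
  by rewrite /row_free mxrank_ctr; apply: col_base_full.
exact: (epsilon_spec (inhabits 0) (fun G => ginv [:: 1; 2; 3; 4] K G) (ex_intro _ G KG)).
Qed.

Variables (p q : nat) (K : 'M[F]_(p, q)).
Implicit Type Y : 'M[F]_(q, p).
Local Notation Kd := (mpinv K).

Lemma mpinv1 : K *m Kd *m K = K. Proof. exact: mpinvP 1%N _. Qed.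
Lemma mpinv2 : Kd *m K *m Kd = Kd. Proof. exact: mpinvP 2%N _. Qed.
Lemma mpinv3 : ctr (K *m Kd) = K *m Kd. Proof. exact: mpinvP 3%N _. Qed.
Lemma mpinv4 : ctr (Kd *m K) = Kd *m K. Proof. exact: mpinvP 4%N _. Qed.

Lemma mulmx_mpinv_idem : K *m Kd *m (K *m Kd) = K *m Kd.
Proof. by rewrite mulmxA mpinv1. Qed.

Lemma mpinv_mulmx_idem : Kd *m K *m (Kd *m K) = Kd *m K.
Proof. by rewrite mulmxA mpinv2. Qed.

Lemma ginv_mpinv s : all (mem [:: 1; 2; 3; 4]) s -> ginv s K Kd.
Proof. by move/ginv_sub; apply; apply: mpinvP. Qed.

Lemma ginv14_mulE (Y : 'M[F]_(q, p)) :
  penrose 1 K Y -> penrose 4 K Y <-> Y *m K = Kd *m K.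
Proof.
rewrite /= => KYK; split=> [YKh|->]; last exact: mpinv4.
have KdKYK : Kd *m K *m (Y *m K) = Kd *m K by rewrite -!mulmxA (mulmxA K Y K) KYK.
by rewrite -KdKYK -YKh -mpinv4 -ctrM -mulmxA (mulmxA K) mpinv1.
Qed.

Lemma rank_col_mpinv : \rank K = q <-> Kd *m K = 1%:M.
Proof.
split=> [rKq|KdK1]; last first.
  by apply/eqP; rewrite eqn_leq rank_leq_col -[leqLHS](mxrank1 F q) -KdK1 mxrankM_maxr.
have uKdK : Kd *m K \in unitmx.
  rewrite -row_free_unit -row_leq_rank; apply: leq_trans (mxrankM_maxr K _).
  by rewrite mulmxA mpinv1 rKq.
by rewrite -(mulmxK uKdK (Kd *m K)) mpinv_mulmx_idem mulmxV.
Qed.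

Lemma rank_row_mpinv : \rank K = p <-> K *m Kd = 1%:M.
Proof.
split=> [rKp|KKd1]; last first.
  by apply/eqP; rewrite eqn_leq rank_leq_row -[leqLHS](mxrank1 F p) -KKd1 mxrankM_maxl.
have uKKd : K *m Kd \in unitmx.
  rewrite -row_free_unit -row_leq_rank; apply: leq_trans (mxrankM_maxl _ K).
  by rewrite mpinv1 rKp.
by rewrite -(mulmxK uKKd (K *m Kd)) mulmx_mpinv_idem mulmxV.
Qed.

Lemma mulmx_mpinv_ker : K *m (1%:M - Kd *m K) = 0.
Proof. by rewrite mulmxBr mulmx1 mulmxA mpinv1 subrr. Qed.

Lemma mpinv_coker_mulmx : (1%:M - K *m Kd) *m K = 0.
Proof. by rewrite mulmxBl mul1mx mpinv1 subrr. Qed.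

Lemma ginv1_rank_col Y : \rank K = q -> penrose 1 K Y -> Y *m K = 1%:M.
Proof.
move=> /rank_col_mpinv KdK1 /= KYK.
by rewrite -KdK1 -[LHS]mul1mx -KdK1 -mulmxA (mulmxA K) KYK.
Qed.

Lemma ginv1_rank_row Y : \rank K = p -> penrose 1 K Y -> K *m Y = 1%:M.
Proof.
move=> /rank_row_mpinv KKd1 /= KYK.
by rewrite -KKd1 -[LHS]mulmx1 -KKd1 mulmxA KYK.
Qed.

Lemma ginv1_rank_full2 Y :
  \rank K = p \/ \rank K = q -> penrose 1 K Y -> penrose 2 K Y.
Proof.
move=> [rKp|rKq] KY1 /=; first by rewrite -mulmxA ginv1_rank_row // mulmx1.
by rewrite ginv1_rank_col // mul1mx.
Qed.

Lemma ginv1_rank_col4 Y : \rank K = q -> penrose 1 K Y -> penrose 4 K Y.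
Proof. by move=> rKq KY1 /=; rewrite ginv1_rank_col // ctr1. Qed.

Lemma ginv1_rank_row3 Y : \rank K = p -> penrose 1 K Y -> penrose 3 K Y.
Proof. by move=> rKp KY1 /=; rewrite ginv1_rank_row // ctr1. Qed.

Lemma penrose_mx0 i Y : K = 0 -> i != 2%N -> penrose i K Y.
Proof. by move=> ->; case: i => [|[|[|[|[|i]]]]] //= _; rewrite ?mulmx0 ?mul0mx ?ctr0. Qed.

Lemma ginv123_sub4 : msubset (ginv [:: 1; 2; 3] K) (ginv [:: 4] K) -> K = 0 \/ \rank K = q.
Proof.
move=> sub4; pose Y W := Kd + (1%:M - Kd *m K) *m W *m (K *m Kd).
have KY W : K *m Y W = K *m Kd by rewrite /Y (mulmxDr K) !mulmxA mulmx_mpinv_ker !mul0mx addr0.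
have YK W : Y W *m K = Kd *m K + (1%:M - Kd *m K) *m W *m K.
  by rewrite /Y (mulmxDl Kd) -(mulmxA _ (K *m Kd)) mpinv1.
have Y123 W : ginv [:: 1; 2; 3] K (Y W).
  apply/ginv3P; rewrite /= KY; split; [exact: mpinv1 | | exact: mpinv3].
  rewrite -mulmxA KY /Y (mulmxDl Kd) (mulmxA Kd) mpinv2.
  by rewrite -(mulmxA _ (K *m Kd)) mulmx_mpinv_idem.
have YKh W : ctr (Kd *m K + (1%:M - Kd *m K) *m W *m K)
                = Kd *m K + (1%:M - Kd *m K) *m W *m K.
  by have /ginv1P /= := sub4 _ (Y123 W); rewrite YK.
have [/eqP|->] := sandwich_hermitian YKh; last by left.
by rewrite subr_eq0 eq_sym => /eqP /rank_col_mpinv; right.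
Qed.

Lemma ginv124_sub3 : msubset (ginv [:: 1; 2; 4] K) (ginv [:: 3] K) -> K = 0 \/ \rank K = p.
Proof.
move=> sub3; pose Y W := Kd + Kd *m K *m W *m (1%:M - K *m Kd).
have YK W : Y W *m K = Kd *m K.
  by rewrite /Y (mulmxDl Kd) -(mulmxA _ _ K) mpinv_coker_mulmx mulmx0 addr0.
have KY W : K *m Y W = K *m Kd + K *m W *m (1%:M - K *m Kd).
  by rewrite /Y (mulmxDr K) !mulmxA mpinv1.
have Y124 W : ginv [:: 1; 2; 4] K (Y W).
  apply/ginv3P; rewrite /= YK; split; last exact: mpinv4.
    by rewrite -mulmxA YK mulmxA mpinv1.
  by rewrite /Y (mulmxDr (Kd *m K)) !mulmxA mpinv2.
have KYh W : ctr (K *m Kd + K *m W *m (1%:M - K *m Kd))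
                = K *m Kd + K *m W *m (1%:M - K *m Kd).
  by have /ginv1P /= := sub3 _ (Y124 W); rewrite KY.
have [->|/eqP] := sandwich_hermitian KYh; first by left.
by rewrite subr_eq0 eq_sym => /eqP /rank_row_mpinv; right.
Qed.

Lemma ginv134_sub2 :
  msubset (ginv [:: 1; 3; 4] K) (ginv [:: 2] K) -> \rank K = p \/ \rank K = q.
Proof.
move=> sub2; pose Y W := Kd + (1%:M - Kd *m K) *m W *m (1%:M - K *m Kd).
have YK W : Y W *m K = Kd *m K.
  by rewrite /Y (mulmxDl Kd) -(mulmxA _ _ K) mpinv_coker_mulmx mulmx0 addr0.
have KY W : K *m Y W = K *m Kd.
  by rewrite /Y (mulmxDr K) !mulmxA mulmx_mpinv_ker !mul0mx addr0.
have Y134 W : ginv [:: 1; 3; 4] K (Y W).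
  by apply/ginv3P; rewrite /= KY YK; split; [exact: mpinv1 | exact: mpinv3 | exact: mpinv4].
have YKY W : Y W *m K *m Y W = Kd.
  rewrite YK /Y (mulmxDr (Kd *m K)) !mulmxA mpinv2 -(mulmxA Kd K).
  by rewrite mulmx_mpinv_ker mulmx0 !mul0mx addr0.
have sandwich0 W : (1%:M - Kd *m K) *m W *m (1%:M - K *m Kd) = 0.
  have /ginv1P /= := sub2 _ (Y134 W); rewrite YKY {1}/Y -[LHS]addr0.
  by move/addrI/esym.
have [|] := sandwich_eq0 sandwich0; move/eqP; rewrite subr_eq0 eq_sym => /eqP.
  by move/rank_col_mpinv; right.
by move/rank_row_mpinv; left.
Qed.

End MoorePenroseInverse.

Section MatrixSets.
Variables (F : numClosedFieldType) (p q : nat).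
Implicit Types S T U : 'M[F]_(p, q) -> Prop.

Lemma msubset_trans S T U : msubset S T -> msubset T U -> msubset S U.
Proof. by move=> ST TU X /ST /TU. Qed.

Lemma mseteq_msubset S T : mseteq S T <-> msubset S T /\ msubset T S.
Proof. by split=> [ST|[ST TS] X]; [split=> X /ST | split=> [/ST|/TS]]. Qed.

Lemma msubset_mseteq S T : msubset S T -> (msubset T S <-> mseteq S T).
Proof. by move=> ST; rewrite mseteq_msubset; split=> [|[]]. Qed.

Lemma mmeets_msubset S T X : S X -> msubset S T -> mmeets S T.
Proof. by move=> SX ST; exists X; split; last exact: ST. Qed.

End MatrixSets.

Definition ginv_proj (F : numClosedFieldType) (p q : nat) (s : seq nat)
    (K : 'M[F]_(p, q)) (P : 'M[F]_q) (Y : 'M[F]_(q, p)) :=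
  ginv s K Y /\ Y *m K = P.

Lemma msubset_ginv_proj (F : numClosedFieldType) (p q : nat) (s t : seq nat)
    (K : 'M[F]_(p, q)) (P : 'M[F]_q) :
  all (mem t) s -> msubset (ginv_proj t K P) (ginv_proj s K P).
Proof. by move=> st Y [/(ginv_sub st) Ys YK]. Qed.

Section OneTwoFourInverses.
Variables (F : numClosedFieldType) (p q : nat) (K : 'M[F]_(p, q)).
Hypotheses (p_gt0 : (0 < p)%N) (q_gt0 : (0 < q)%N).
Local Notation K124 := (ginv [:: 1; 2; 4] K).
Local Notation r := (\rank K).

Lemma ginv124_mpinv : K124 (mpinv K).
Proof. exact: ginv_mpinv. Qed.

Lemma rank_mx0 : K = 0 -> r = 0%N.
Proof. by move=> ->; rewrite mxrank0. Qed.

Lemma ginv1_sub124 : r = q -> msubset (ginv [:: 1] K) K124.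
Proof.
move=> rKq Y /ginv1P Y1; apply/ginv3P; split=> //.
  by apply: ginv1_rank_full2 Y1; right.
exact: ginv1_rank_col4.
Qed.

Lemma ginv123_sub124 : msubset (ginv [:: 1; 2; 3] K) K124 -> K = 0 \/ r = q.
Proof. by move=> sub; apply: ginv123_sub4; apply: msubset_trans sub _; apply: msubset_ginv. Qed.

Lemma ginv13_sub124 : msubset (ginv [:: 1; 3] K) K124 -> r = q.
Proof.
move=> sub.
have sub4 : msubset (ginv [:: 1; 2; 3] K) K124.
  by apply: msubset_trans _ sub; apply: msubset_ginv.
have sub2 : msubset (ginv [:: 1; 3; 4] K) (ginv [:: 2] K).
  by apply: msubset_trans (msubset_trans _ sub) _; apply: msubset_ginv.
have [K0|//] := ginv123_sub124 sub4; have [rKp|//] := ginv134_sub2 sub2.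
by have := rank_mx0 K0; lia.
Qed.

Lemma ginv12_sub124 : K = 0 \/ r = q -> msubset (ginv [:: 1; 2] K) K124.
Proof.
case=> [K0|/ginv1_sub124 sub1]; last by apply: msubset_trans _ sub1; apply: msubset_ginv.
by move=> Y /ginv2P[Y1 Y2]; apply/ginv3P; split=> //; apply: penrose_mx0.
Qed.

Lemma ginv124_sub13 : msubset K124 (ginv [:: 1; 3] K) <-> K = 0 \/ r = p.
Proof.
split=> [sub|rK Y /ginv3P[Y1 _ _]].
  by apply: ginv124_sub3; apply: msubset_trans sub _; apply: msubset_ginv.
apply/ginv2P; split=> //; case: rK => [K0|rKp]; first exact: penrose_mx0.
exact: ginv1_rank_row3.
Qed.

Lemma ginv124_sub123 : msubset K124 (ginv [:: 1; 2; 3] K) <-> K = 0 \/ r = p.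
Proof.
rewrite -ginv124_sub13; split=> sub; first by apply: msubset_trans sub _; apply: msubset_ginv.
move=> Y Y124; have /ginv2P[Y1 Y3] := sub Y Y124.
by have /ginv3P[_ Y2 _] := Y124; apply/ginv3P.
Qed.

Lemma ginv124_ginv1 :
  msubset K124 (ginv [:: 1] K)
  /\ (msubset (ginv [:: 1] K) K124 <-> mseteq K124 (ginv [:: 1] K))
  /\ (mseteq K124 (ginv [:: 1] K) <-> r = q).
Proof.
have sub : msubset K124 (ginv [:: 1] K) by apply: msubset_ginv.
split=> //; split; first exact: msubset_mseteq.
rewrite -msubset_mseteq //; split; last exact: ginv1_sub124.
by move=> sub1; apply: ginv13_sub124; apply: msubset_trans sub1; apply: msubset_ginv.
Qed.

Lemma ginv124_ginv12 :
  msubset K124 (ginv [:: 1; 2] K)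
  /\ (msubset (ginv [:: 1; 2] K) K124 <-> mseteq K124 (ginv [:: 1; 2] K))
  /\ (mseteq K124 (ginv [:: 1; 2] K) <-> K = 0 \/ r = q).
Proof.
have sub : msubset K124 (ginv [:: 1; 2] K) by apply: msubset_ginv.
split=> //; split; first exact: msubset_mseteq.
rewrite -msubset_mseteq //; split; last exact: ginv12_sub124.
by move=> sub12; apply: ginv123_sub124; apply: msubset_trans sub12; apply: msubset_ginv.
Qed.

Lemma ginv124_ginv13 :
  mmeets K124 (ginv [:: 1; 3] K)
  /\ (msubset (ginv [:: 1; 3] K) K124 <-> r = q)
  /\ (msubset K124 (ginv [:: 1; 3] K) <-> K = 0 \/ r = p)
  /\ (mseteq K124 (ginv [:: 1; 3] K) <-> r = p /\ p = q).
Proof.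
have sub13 : msubset (ginv [:: 1; 3] K) K124 <-> r = q.
  by split; [exact: ginv13_sub124 | move/ginv1_sub124; apply: msubset_trans; apply: msubset_ginv].
split; first by exists (mpinv K); split; apply: ginv_mpinv.
split=> //; split; first exact: ginv124_sub13.
rewrite mseteq_msubset ginv124_sub13 sub13; split=> [[[K0|rKp] rKq]|[rKp pq]].
- by have := rank_mx0 K0; lia.
- by split=> //; rewrite -rKp.
- by split; [right | rewrite rKp].
Qed.

Lemma ginv124_ginv123 :
  mmeets K124 (ginv [:: 1; 2; 3] K)
  /\ (msubset (ginv [:: 1; 2; 3] K) K124 <-> K = 0 \/ r = q)
  /\ (msubset K124 (ginv [:: 1; 2; 3] K) <-> K = 0 \/ r = p)
  /\ (mseteq K124 (ginv [:: 1; 2; 3] K) <-> K = 0 \/ (r = p /\ p = q)).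
Proof.
have sub123 : msubset (ginv [:: 1; 2; 3] K) K124 <-> K = 0 \/ r = q.
  split; first exact: ginv123_sub124.
  by move/ginv12_sub124; apply: msubset_trans; apply: msubset_ginv.
split; first by exists (mpinv K); split; apply: ginv_mpinv.
split=> //; split; first exact: ginv124_sub123.
rewrite mseteq_msubset ginv124_sub123 sub123.
split=> [[[K0|rKp] [K0'|rKq]]|[K0|[rKp pq]]]; try by left.
- by right; split=> //; rewrite -rKp.
- by split; left.
- by split; right=> //; rewrite rKp.
Qed.

End OneTwoFourInverses.

Section PrescribedProjector.
Variables (F : numClosedFieldType) (p q : nat) (K : 'M[F]_(p, q)) (Y0 : 'M[F]_(q, p)).
Hypotheses (p_gt0 : (0 < p)%N) (q_gt0 : (0 < q)%N).
Hypothesis Y0_123 : ginv [:: 1; 2; 3] K Y0.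
Local Notation K124 := (ginv [:: 1; 2; 4] K).
Local Notation r := (\rank K).
Local Notation Kd := (mpinv K).
Local Notation T s := (ginv_proj s K (Y0 *m K)).

Lemma ginv124_mulE Y : K124 Y -> Y *m K = Kd *m K.
Proof. by move/ginv3P=> [Y1 _ Y4]; apply/ginv14_mulE. Qed.

Lemma ginv124_Y0 : K124 Y0 <-> Y0 *m K = Kd *m K.
Proof.
split; first exact: ginv124_mulE.
by have /ginv3P[Y01 Y02 _] := Y0_123; move/(ginv14_mulE Y01) => Y04; apply/ginv3P.
Qed.

Lemma ginv124_meets_proj s : mmeets K124 (T s) -> Y0 *m K = Kd *m K.
Proof. by move=> [Y [/ginv124_mulE <- [_ ->]]]. Qed.

Lemma ginv_proj_penrose4 s Y :
  1 \in s -> Y0 *m K = Kd *m K -> T s Y -> penrose 4 K Y.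
Proof. by move=> s1 Y0K [Ys YK]; apply/ginv14_mulE; [exact: Ys | rewrite YK]. Qed.

Lemma ginv124_sub_proj s :
  all (mem [:: 1; 2; 4]) s -> Y0 *m K = Kd *m K -> msubset K124 (T s).
Proof. by move=> ss Y0K Y Y124; split; [exact: ginv_sub Y124 | rewrite Y0K ginv124_mulE]. Qed.

Lemma proj_sub124_Y0 s :
  all (mem [:: 1; 2; 3]) s -> msubset (T s) K124 -> Y0 *m K = Kd *m K.
Proof. by move=> ss sub; apply/ginv124_Y0; apply: sub; split=> //; exact: ginv_sub Y0_123. Qed.

Lemma proj1_sub124 :
  Y0 *m K = Kd *m K -> r = p \/ r = q -> msubset (T [:: 1]) K124.
Proof.
move=> Y0K rK Y TY; have [/ginv1P Y1 _] := TY; apply/ginv3P; split=> //.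
  exact: ginv1_rank_full2.
exact: ginv_proj_penrose4 TY.
Qed.

Lemma proj13_sub124_rank :
  Y0 *m K = Kd *m K -> msubset (T [:: 1; 3]) K124 -> r = p \/ r = q.
Proof.
move=> Y0K sub; apply: ginv134_sub2 => Y /ginv3P[Y1 Y3 Y4]; apply/ginv1P.
have TY : T [:: 1; 3] Y by split; [exact/ginv2P | rewrite Y0K; apply/ginv14_mulE].
by have /ginv3P[] := sub Y TY.
Qed.

Lemma rank_eq_minn : r = minn p q <-> r = p \/ r = q.
Proof. by have := rank_leq_row K; have := rank_leq_col K; lia. Qed.

Lemma ginv124_proj1 :
  (mmeets K124 (T [:: 1]) <-> msubset K124 (T [:: 1]))
  /\ (msubset K124 (T [:: 1]) <-> Y0 *m K = Kd *m K)
  /\ (msubset (T [:: 1]) K124 <-> mseteq K124 (T [:: 1]))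
  /\ (mseteq K124 (T [:: 1]) <-> Y0 *m K = Kd *m K /\ r = minn p q).
Proof.
have subY0 : msubset K124 (T [:: 1]) <-> Y0 *m K = Kd *m K.
  split; last exact: ginv124_sub_proj.
  by move=> sub; apply: ginv124_meets_proj (mmeets_msubset (ginv124_mpinv K) sub).
split.
  by split=> [/ginv124_meets_proj/subY0 //|]; apply: mmeets_msubset (ginv124_mpinv K).
split=> //; split.
  split=> [sub|/mseteq_msubset[] //]; apply/mseteq_msubset.
  by rewrite subY0; split=> //; apply: proj_sub124_Y0 sub.
rewrite mseteq_msubset subY0 rank_eq_minn; split=> [[Y0K sub]|[Y0K rK]]; last first.
  by split=> //; apply: proj1_sub124.
split=> //; apply: proj13_sub124_rank => //.
by apply: msubset_trans sub; apply: msubset_ginv_proj.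
Qed.

Lemma ginv124_proj12 :
  (mmeets K124 (T [:: 1; 2]) <-> mseteq K124 (T [:: 1; 2]))
  /\ (mseteq K124 (T [:: 1; 2]) <-> Y0 *m K = Kd *m K).
Proof.
have eqY0 : mseteq K124 (T [:: 1; 2]) <-> Y0 *m K = Kd *m K.
  split=> [/mseteq_msubset[sub _]|Y0K].
    exact: ginv124_meets_proj (mmeets_msubset (ginv124_mpinv K) sub).
  apply/mseteq_msubset; split; first exact: ginv124_sub_proj.
  move=> Y TY; have [/ginv2P[Y1 Y2] _] := TY; apply/ginv3P; split=> //.
  exact: ginv_proj_penrose4 TY.
split=> //; split=> [/ginv124_meets_proj/eqY0 //|/mseteq_msubset[sub _]].
exact: mmeets_msubset (ginv124_mpinv K) sub.
Qed.

Lemma ginv124_proj13 :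
  (mmeets K124 (T [:: 1; 3]) <-> Y0 *m K = Kd *m K)
  /\ (msubset (T [:: 1; 3]) K124 <-> Y0 *m K = Kd *m K /\ r = minn p q)
  /\ (msubset K124 (T [:: 1; 3]) <-> K = 0 \/ (Y0 *m K = Kd *m K /\ r = p))
  /\ (mseteq K124 (T [:: 1; 3]) <-> Y0 *m K = Kd *m K /\ r = p).
Proof.
have meetY0 : mmeets K124 (T [:: 1; 3]) <-> Y0 *m K = Kd *m K.
  split=> [|Y0K]; first exact: ginv124_meets_proj.
  by exists Kd; split; [exact: ginv124_mpinv | split; [apply: ginv_mpinv | rewrite Y0K]].
have supY0 : msubset (T [:: 1; 3]) K124 <-> Y0 *m K = Kd *m K /\ r = minn p q.
  rewrite rank_eq_minn; split=> [sub|[Y0K rK] Y TY].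
    have Y0K : Y0 *m K = Kd *m K by apply: proj_sub124_Y0 sub.
    by split=> //; exact: proj13_sub124_rank.
  have [/ginv2P[Y1 _] _] := TY; apply/ginv3P; split=> //; first exact: ginv1_rank_full2.
  exact: ginv_proj_penrose4 TY.
have subY0 : msubset K124 (T [:: 1; 3]) <-> K = 0 \/ (Y0 *m K = Kd *m K /\ r = p).
  split=> [sub|[K0|[Y0K rKp]] Y Y124].
  - have [K0|nK0] := eqVneq K 0; [by left | right].
    split; first exact/meetY0/(mmeets_msubset (ginv124_mpinv K) sub).
    have /ginv124_sub13[K0|//] : msubset K124 (ginv [:: 1; 3] K).
      by move=> Y /sub[].
    by rewrite K0 eqxx in nK0.
  - split; last by rewrite K0 !mulmx0.
    by have /ginv3P[Y1 _ _] := Y124; apply/ginv2P; split=> //; exact: penrose_mx0.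
  - split; last by rewrite Y0K ginv124_mulE.
    by apply: (ginv124_sub13 K).2 Y124; right.
split=> //; split=> //; split=> //.
rewrite mseteq_msubset subY0 supY0 rank_eq_minn.
split=> [[[K0|Y0Kp] [_ rK]]|[Y0K rKp]].
- by have := rank_mx0 K0; case: rK; lia.
- exact: Y0Kp.
- by split; [right | split=> //; left].
Qed.

End PrescribedProjector.

Section UnitFactors.
Variables (F : numClosedFieldType) (p q : nat) (X : 'M[F]_(p, q)).

Lemma penrose_mulmxl (A : 'M[F]_p) (H : 'M[F]_(q, p)) i :
  A \in unitmx -> i != 3%N -> penrose i (A *m X) H <-> penrose i X (H *m A).
Proof.
rewrite -row_full_unit => fullA; have freeA : row_free A by rewrite row_free_unit -row_full_unit.
case: i => [|[|[|[|[|i]]]]] //= _.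
- have -> : A *m X *m H *m (A *m X) = A *m (X *m (H *m A) *m X) by rewrite !mulmxA.
  by split=> [/(row_full_inj fullA)|->].
- have -> : H *m A *m X *m (H *m A) = H *m (A *m X) *m H *m A by rewrite !mulmxA.
  by split=> [->|/(row_free_inj freeA)].
- by rewrite mulmxA.
Qed.

Lemma penrose_mulmxr (C : 'M[F]_q) (Y : 'M[F]_(q, p)) i :
  C \in unitmx -> i != 4%N -> penrose i X (C *m Y) <-> penrose i (X *m C) Y.
Proof.
rewrite -row_full_unit => fullC; have freeC : row_free C by rewrite row_free_unit -row_full_unit.
case: i => [|[|[|[|[|i]]]]] //= _.
- have -> : X *m C *m Y *m (X *m C) = X *m (C *m Y) *m X *m C by rewrite !mulmxA.
  by split=> [->|/(row_free_inj freeC)].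
- have -> : C *m Y *m X *m (C *m Y) = C *m (Y *m (X *m C) *m Y) by rewrite !mulmxA.
  by split=> [/(row_full_inj fullC)|->].
- by rewrite mulmxA.
Qed.

Lemma ginv_mulmxl (A : 'M[F]_p) (H : 'M[F]_(q, p)) t :
  A \in unitmx -> 3%N \notin t -> ginv t (A *m X) H <-> ginv t X (H *m A).
Proof.
move=> uA t3; have i3 i : i \in t -> i != 3%N by apply: contraTneq => ->.
by split=> XH i it; apply/(penrose_mulmxl H uA (i3 i it)); apply: XH.
Qed.

Lemma ginv_mulmxr (C : 'M[F]_q) (Y : 'M[F]_(q, p)) t :
  C \in unitmx -> 4%N \notin t -> ginv t X (C *m Y) <-> ginv t (X *m C) Y.
Proof.
move=> uC t4; have i4 i : i \in t -> i != 4%N by apply: contraTneq => ->.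
by split=> XY i it; apply/(penrose_mulmxr Y uC (i4 i it)); apply: XY.
Qed.

Lemma penrose4_mulmxr (C : 'M[F]_q) (Y : 'M[F]_(q, p)) :
  C \in unitmx -> penrose 1 X (C *m Y) ->
  penrose 4 X (C *m Y) <-> Y *m (X *m C) = invmx C *m mpinv X *m (X *m C).
Proof.
move=> uC XY1; rewrite ginv14_mulE //; split=> [e|e].
  by have := congr1 (fun Z => invmx C *m Z *m C) e; rewrite !mulmxA mulVmx // mul1mx.
have freeC : row_free C by rewrite row_free_unit.
apply: (row_free_inj freeC).
by have := congr1 (mulmx C) e; rewrite !mulmxA mulmxV // mul1mx.
Qed.

End UnitFactors.

Section RangeCondition.
Variables (F : numClosedFieldType) (m n : nat) (B : 'M[F]_(m, n)).
Local Notation P := (mpinv B *m B).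

Lemma mpinv_proj_ctr : P *m ctr B = ctr B.
Proof. by rewrite -mpinv4 -ctrM mulmxA mpinv1. Qed.

Lemma mpinv_projE : P = ctr B *m ctr (mpinv B).
Proof. by rewrite -mpinv4 ctrM. Qed.

(* [P] is the orthogonal projector onto the range of [ctr B], which is thus
   invariant under [V] exactly when [P] commutes with the self-adjoint [V]. *)
Lemma colspace_eq_commute (V : 'M[F]_n) :
  ctr V = V -> V \in unitmx ->
  colspace_eq (V *m ctr B) (ctr B) <-> V *m P = P *m V.
Proof.
move=> Vh uV; split=> [/andP[/submxP[D eD] _]|VP].
  have VBt : V *m ctr B = ctr B *m D^T by rewrite -(trmxK (V *m ctr B)) eD trmx_mul trmxK.
  have PVP : P *m (V *m P) = V *m P.
    have -> : V *m P = ctr B *m D^T *m ctr (mpinv B) by rewrite mpinv_projE mulmxA VBt.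
    by rewrite !mulmxA mpinv_proj_ctr.
  have PV : P *m V = ctr (V *m P) by rewrite ctrM mpinv4 Vh.
  by rewrite PV -[in ctr _]PVP ctrM -PV mpinv4 -mulmxA PVP.
have VBt : V *m ctr B = ctr B *m (ctr (mpinv B) *m V *m ctr B).
  by rewrite -{1}mpinv_proj_ctr mulmxA VP mpinv_projE !mulmxA.
have sub : ((V *m ctr B)^T <= (ctr B)^T)%MS by rewrite VBt trmx_mul submxMl.
rewrite /colspace_eq /eqmx sub /= -(mxrank_leqif_sup sub).2 trmx_mul mxrankMfree //.
by rewrite row_free_unit unitmx_tr.
Qed.

Lemma ctr_conj_commute (C : 'M[F]_n) (Q : 'M[F]_n) :
  C \in unitmx -> ctr Q = Q ->
  ctr (invmx C *m Q *m C) = invmx C *m Q *m C <-> C *m ctr C *m Q = Q *m (C *m ctr C).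
Proof.
move=> uC Qh; have uCt : ctr C \in unitmx by rewrite ctr_unit.
rewrite !ctrM Qh ctr_inv; split=> e.
  have := congr1 (fun Z => C *m Z *m ctr C) e.
  by rewrite !mulmxA (mulmxKV uCt) mulmxV // mul1mx => ->.
apply: (can_inj (mulKmx uC)); apply: (can_inj (mulmxK uCt)).
by rewrite !mulmxA (mulmxKV uCt) mulmxV // mul1mx e mulmxA.
Qed.

End RangeCondition.

Section RightUnitShift.
Variables (F : numClosedFieldType) (p q : nat) (A : 'M[F]_q).
Hypothesis uA : A \in unitmx.
Implicit Types S T : 'M[F]_(p, q) -> Prop.

Lemma msubset_mulmxr S T :
  msubset (fun H => S (H *m A)) (fun H => T (H *m A)) <-> msubset S T.
Proof.
split=> [ST Y|ST H /ST //]; rewrite -(mulmxKV uA Y); exact: ST.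
Qed.

Lemma mseteq_mulmxr S T :
  mseteq (fun H => S (H *m A)) (fun H => T (H *m A)) <-> mseteq S T.
Proof. by rewrite !mseteq_msubset !msubset_mulmxr. Qed.

Lemma mmeets_mulmxr S T :
  mmeets (fun H => S (H *m A)) (fun H => T (H *m A)) <-> mmeets S T.
Proof.
split=> [[H STH]|[Y [SY TY]]]; first by exists (H *m A).
by exists (Y *m invmx A); rewrite mulmxKV.
Qed.

End RightUnitShift.

Section Reduction.
Variables (F : numClosedFieldType) (m n : nat).
Variables (A : 'M[F]_m) (B : 'M[F]_(m, n)) (C : 'M[F]_n).
Hypotheses (uA : A \in unitmx) (uC : C \in unitmx).
Local Notation N := (B *m C).
Local Notation Y0 := (invmx C *m mpinv B).

Lemma ginv124_mulmx_unit :
  ginv [:: 1; 2; 4] (A *m B *m C) = fun H => ginv [:: 1; 2; 4] N (H *m A).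
Proof.
apply: functional_extensionality => H; apply: propositional_extensionality.
by rewrite -mulmxA ginv_mulmxl.
Qed.

Lemma tsetE t H : tset t A B C H <-> ginv t B (C *m (H *m A)).
Proof.
split=> [[G [BG HG]]|BH]; first by rewrite HG !mulmxA mulmxKV // mulmxV // mul1mx.
by exists (C *m (H *m A)); split=> //; rewrite !mulmxA mulVmx // mul1mx mulmxK.
Qed.

Lemma tset_ginv t : 4%N \notin t -> tset t A B C = fun H => ginv t N (H *m A).
Proof.
move=> t4; apply: functional_extensionality => H; apply: propositional_extensionality.
by rewrite tsetE ginv_mulmxr.
Qed.

(* In the coordinates [Y = H *m A], equation (4) for [B] becomes a
   prescription of the projector [Y *m N]. *)
Lemma tset_ginv_proj s : 1%N \in s -> 4%N \notin s ->
  tset (rcons s 4) A B C = fun H => ginv_proj s N (Y0 *m N) (H *m A).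
Proof.
move=> s1 s4; apply: functional_extensionality => H; apply: propositional_extensionality.
rewrite tsetE ginv_rcons ginv_mulmxr // /ginv_proj.
have BY1 : ginv s N (H *m A) -> penrose 1 B (C *m (H *m A)).
  by move=> NY; apply/(penrose_mulmxr (i := 1%N) B _ uC isT); apply: NY.
by split=> [[NY BY4]|[NY YN]]; split=> //; apply/penrose4_mulmxr => //; apply: BY1.
Qed.

Lemma ginv123_Y0 : ginv [:: 1; 2; 3] N Y0.
Proof. by rewrite -ginv_mulmxr // mulKVmx //; apply: ginv_mpinv. Qed.

Lemma colspace_eq_mpinv :
  colspace_eq (C *m ctr C *m ctr B) (ctr B) <-> Y0 *m N = mpinv N *m N.
Proof.
have Vh : ctr (C *m ctr C) = C *m ctr C by rewrite ctrM ctrK.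
have uV : C *m ctr C \in unitmx by rewrite unitmx_mul uC ctr_unit uC.
have /ginv3P[Y01 _ _] := ginv123_Y0.
rewrite colspace_eq_commute // -ctr_conj_commute ?mpinv4 //.
by rewrite -ginv14_mulE //= !mulmxA.
Qed.

End Reduction.

Theorem theorem4p2 (F : numClosedFieldType) (m n : nat)
  (hm : (1 <= m)%N) (hn : (1 <= n)%N)
  (A : 'M[F]_m) (B : 'M[F]_(m, n)) (C : 'M[F]_n)
  (hA : A \in unitmx) (hC : C \in unitmx) :
  let M := A *m B *m C in
  let M124 := ginv [:: 1; 2; 4]%N M in
  let T t := tset t A B C in
  let R2 := colspace_eq (C *m ctr C *m ctr B) (ctr B) in
  (* (41) *)
  (msubset M124 (T [:: 1]%N)
   /\ (msubset (T [:: 1]%N) M124 <-> mseteq M124 (T [:: 1]%N))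
   /\ (mseteq M124 (T [:: 1]%N) <-> \rank B = n))
  (* (42) *)
  /\ (msubset M124 (T [:: 1; 2]%N)
   /\ (msubset (T [:: 1; 2]%N) M124 <-> mseteq M124 (T [:: 1; 2]%N))
   /\ (mseteq M124 (T [:: 1; 2]%N) <-> B = 0 \/ \rank B = n))
  (* (43) *)
  /\ (mmeets M124 (T [:: 1; 3]%N)
   /\ (msubset (T [:: 1; 3]%N) M124 <-> \rank B = n)
   /\ (msubset M124 (T [:: 1; 3]%N) <-> B = 0 \/ \rank B = m)
   /\ (mseteq M124 (T [:: 1; 3]%N) <-> \rank B = m /\ m = n))
  (* (44) *)
  /\ ((mmeets M124 (T [:: 1; 4]%N) <-> msubset M124 (T [:: 1; 4]%N))
   /\ (msubset M124 (T [:: 1; 4]%N) <-> R2)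
   /\ (msubset (T [:: 1; 4]%N) M124 <-> mseteq M124 (T [:: 1; 4]%N))
   /\ (mseteq M124 (T [:: 1; 4]%N) <-> R2 /\ \rank B = minn m n))
  (* (45) *)
  /\ (mmeets M124 (T [:: 1; 2; 3]%N)
   /\ (msubset (T [:: 1; 2; 3]%N) M124 <-> B = 0 \/ \rank B = n)
   /\ (msubset M124 (T [:: 1; 2; 3]%N) <-> B = 0 \/ \rank B = m)
   /\ (mseteq M124 (T [:: 1; 2; 3]%N) <-> B = 0 \/ (\rank B = m /\ m = n)))
  (* (46) *)
  /\ ((mmeets M124 (T [:: 1; 2; 4]%N) <-> mseteq M124 (T [:: 1; 2; 4]%N))
   /\ (mseteq M124 (T [:: 1; 2; 4]%N) <-> R2))
  (* (47) *)
  /\ ((mmeets M124 (T [:: 1; 3; 4]%N) <-> R2)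
   /\ (msubset (T [:: 1; 3; 4]%N) M124 <-> R2 /\ \rank B = minn m n)
   /\ (msubset M124 (T [:: 1; 3; 4]%N) <-> B = 0 \/ (R2 /\ \rank B = m))
   /\ (mseteq M124 (T [:: 1; 3; 4]%N) <-> R2 /\ \rank B = m))
  (* (48) *)
  /\ (M124 (invmx C *m mpinv B *m invmx A) <-> R2).
Proof.
move=> M M124 T R2; rewrite /M124 /T /R2 /M {M M124 T R2}.
rewrite ginv124_mulmx_unit // (tset_ginv_proj B hA hC (s := [:: 1])) //.
rewrite (tset_ginv_proj B hA hC (s := [:: 1; 2])) //.
rewrite (tset_ginv_proj B hA hC (s := [:: 1; 3])) // !tset_ginv //.
rewrite !msubset_mulmxr // !mseteq_mulmxr // !mmeets_mulmxr //= mulmxKV //.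
have rankN : \rank (B *m C) = \rank B by rewrite mxrankMfree // row_free_unit.
have N0 : B *m C = 0 <-> B = 0.
  by split=> [BC0|->]; [rewrite -(mulmxK hC B) BC0 mul0mx | rewrite mul0mx].
rewrite -rankN -N0 colspace_eq_mpinv //.
have Y0_123 := ginv123_Y0 B hC.
split; first exact: ginv124_ginv1.
split; first exact: ginv124_ginv12.
split; first exact: ginv124_ginv13.
split; first exact: ginv124_proj1.
split; first exact: ginv124_ginv123.
split; first exact: ginv124_proj12.
split; first exact: ginv124_proj13.
exact: ginv124_Y0.
Qed.
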